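(* In the setting of the context, \[ \lim_{u\to u_\infty+0}\psi(u)=0,\qquad \lim_{u\to u_\infty+0}\Bigl(\tilde E e^{-\delta\varphi(u)}+\tilde S e^{(\beta/\gamma)\tilde R}e^{-\delta\varphi(u)}\int_u^{u_0}e^{\delta\varphi(v)}dv\Bigr)=0 . \]
   Context: Let $\beta,\gamma,\delta>0$ be constants and $\tilde S,\tilde E,\tilde I,\tilde R$ real numbers with $N:=\tilde S+\tilde E+\tilde I+\tilde R>0$. Standing assumptions: (A1) $\tilde I>0$; (A2) $\tilde E>(\gamma/\delta)\tilde I$; (A3) $\tilde S>\delta\tilde E/(\beta\tilde I)$; (A4) $\tilde R\ge 0$ and $N>\tilde S e^{(\beta/\gamma)\tilde R}+\tilde R$. Let $\alpha$ be the unique solution in $(\tilde R,N)$ of $x=N-\tilde S e^{(\beta/\gamma)\tilde R}e^{-(\beta/\gamma)x}$, and assume (A5) $\tilde S<(\gamma/\beta)e^{(\beta/\gamma)(\alpha-\tilde R)}$. Put $u_0:=e^{-(\beta/\gamma)\tilde R}$, $u_\infty:=e^{-(\beta/\gamma)\alpha}$. Let $\psi$ be the unique function, continuous and positive on $(u_\infty,u_0]$ and $C^1$ on $(u_\infty,u_0)$, satisfying $\psi'(u)\psi(u)-\frac{\gamma+\delta}{u}\psi(u)=-\delta\,\frac{\beta N-\beta\tilde S e^{(\beta/\gamma)\tilde R}u+\gamma\log u}{u}$ on $(u_\infty,u_0)$ and $\psi(u_0)=\beta\tilde I$. Let $\varphi(u):=\int_u^{u_0}\frac{d\xi}{\xi\psi(\xi)}$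 for $u\in(u_\infty,u_0]$. *)

From Stdlib Require Import Reals.
From Coquelicot Require Import Coquelicot.
Open Scope R_scope.

Definition varphi (psi : R -> R) (u0 u : R) : R :=
  RInt (fun xi => / (xi * psi xi)) u u0.

From Stdlib Require Import Reals Lra.
From Coquelicot Require Import Coquelicot.
Open Scope R_scope.

(* Let k := beta S e^{(beta/gamma) R} and F u := beta N - k u + gamma ln u.  The equation for
   psi makes (F - psi) e^{delta varphi} - k \int_u^{u0} e^{delta varphi} constant, equal to its
   value F u0 - psi u0 = beta E at u0.  Hence
   F - psi = (beta E + k \int_u^{u0} e^{delta varphi}) e^{-delta varphi} is nonnegative, so
   0 < psi <= F, and the second quantity of the theorem is exactly (F - psi) / beta.  Both psi
   and F - psi are squeezed between 0 and F, which vanishes at u_oo by the equation defining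
   alpha. *)

Lemma continuous_Rmin_l (b x : R) : continuous (fun y => Rmin y b) x.
Proof.
  apply continuity_pt_filterlim, continuity_pt_locally; intros eps.
  pose proof (cond_pos eps).
  apply locally_interval with (x - eps) (x + eps); simpl; try lra.
  intros y hlo hhi.
  unfold Rmin; destruct (Rle_dec y b), (Rle_dec x b); apply Rabs_def1; lra.
Qed.

Lemma continuous_clamp (f : R -> R) (a b : R) :
  a < b -> (forall c, a < c < b -> continuous f c) ->
  filterlim f (at_left b) (locally (f b)) ->
  forall x, a < x -> continuous (fun y => f (Rmin y b)) x.
Proof.
  intros hab hf hb x hx.
  destruct (C0_extension_right f (f b) a b hab hf hb) as [g [hg [hgf hgb]]].
  assert (hfg : forall y, f (Rmin y b) = g (Rmin y b)).
  { intros y; destruct (Rle_lt_or_eq_dec _ _ (Rmin_r y b)) as [h | ->].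
    - now rewrite hgf.
    - now rewrite hgb. }
  apply continuous_ext with (fun y => g (Rmin y b)); [now intros y; rewrite hfg|].
  apply continuous_comp; [apply continuous_Rmin_l | apply hg].
  apply Rmin_glb_lt; lra.
Qed.

Lemma is_derive_continuous (f : R -> R) (x l : R) : is_derive f x l -> continuous f x.
Proof.
  intros h; apply (ex_derive_continuous (K := R_AbsRing) (V := R_NormedModule)).
  now exists l.
Qed.

Lemma is_derive_RInt_lower (f : R -> R) (a b x : R) :
  (forall z, a < z -> continuous f z) -> a < x -> a < b ->
  is_derive (fun y => RInt f y b) x (- f x).
Proof.
  intros hf hx hb; apply (is_derive_RInt' f _ x b); [|now apply hf].
  apply locally_interval with a p_infty; simpl; [exact hx | exact I|].
  intros y hy _; apply (RInt_correct (V := R_CompleteNormedModule)), ex_RInt_continuous.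
  intros z [hz _]; apply hf.
  apply Rlt_le_trans with (Rmin y b); [apply Rmin_glb_lt|]; lra.
Qed.

Lemma eq_of_is_derive_0 (h : R -> R) (u b : R) : u < b ->
  (forall y, u <= y <= b -> continuous h y) ->
  (forall y, u < y < b -> is_derive h y 0) -> h u = h b.
Proof.
  intros hub hc hd.
  destruct (MVT_gen h u b (fun _ => 0)) as [c [_ hmvt]];
    rewrite ?Rmin_left, ?Rmax_right; try lra.
  - intros y hy; now apply hd.
  - intros y hy; now apply continuity_pt_filterlim, hc.
Qed.

Lemma at_right_of_interval (P : R -> Prop) (a b : R) : a < b ->
  (forall u, a < u < b -> P u) -> at_right a P.
Proof.
  intros hab hP; apply locally_interval with m_infty b; simpl; [exact I | exact hab|].
  intros u _ hub hau; now apply hP.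
Qed.

Lemma filterlim_at_right_squeeze_0 (f g : R -> R) (a b : R) : a < b ->
  (forall u, a < u < b -> 0 <= f u <= g u) -> filterlim g (at_right a) (locally 0) ->
  filterlim f (at_right a) (locally 0).
Proof.
  intros hab hfg hg.
  apply (filterlim_le_le (fun _ => 0) f g (Finite 0)); [|apply filterlim_const | exact hg].
  exact (at_right_of_interval _ a b hab hfg).
Qed.

(* With [K = beta S e^{(beta/gamma) R}] and x := -(gamma/beta) ln u the R-coordinate,
   [final_size_fun u = beta (N - S e^{(beta/gamma)(R - x)} - x)]; its root is the final
   size alpha. *)
Definition final_size_fun (beta gamma N K u : R) : R := beta * N - K * u + gamma * ln u.

Lemma is_derive_final_size_fun (beta gamma N K u : R) : 0 < u ->
  is_derive (final_size_fun beta gamma N K) u (gamma / u - K).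
Proof. intros hu; unfold final_size_fun; auto_derive; [lra | field; lra]. Qed.

Lemma final_size_fun_exp (beta gamma N K x : R) : 0 < gamma ->
  final_size_fun beta gamma N K (exp (- (beta / gamma) * x))
  = beta * N - K * exp (- (beta / gamma) * x) - beta * x.
Proof. intros hg; unfold final_size_fun; rewrite ln_exp; field; lra. Qed.

Lemma final_size_fun_root (beta gamma N S c alpha : R) : 0 < gamma ->
  alpha = N - S * c * exp (- (beta / gamma) * alpha) ->
  final_size_fun beta gamma N (beta * S * c) (exp (- (beta / gamma) * alpha)) = 0.
Proof.
  intros hg halpha; rewrite final_size_fun_exp by exact hg.
  replace (beta * N - beta * S * c * exp (- (beta / gamma) * alpha) - beta * alpha)
    with (beta * (N - S * c * exp (- (beta / gamma) * alpha) - alpha)) by ring.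
  rewrite <- halpha; ring.
Qed.

Lemma final_size_fun_initial (beta gamma N S R : R) : 0 < gamma ->
  final_size_fun beta gamma N (beta * S * exp ((beta / gamma) * R)) (exp (- (beta / gamma) * R))
  = beta * (N - S - R).
Proof.
  intros hg; rewrite final_size_fun_exp by exact hg.
  rewrite Rmult_assoc, <- exp_plus.
  replace (beta / gamma * R + - (beta / gamma) * R) with 0 by ring.
  rewrite exp_0; ring.
Qed.

Section FirstIntegral.

Variables (a b gamma delta k : R) (F psi : R -> R).
Hypothesis a_pos : 0 < a.
Hypothesis a_lt_b : a < b.
Hypothesis psi_pos : forall u, a < u <= b -> 0 < psi u.
Hypothesis psi_derivable : forall u, a < u < b -> ex_derive psi u.
Hypothesis psi_left_continuous : filterlim psi (at_left b) (locally (psi b)).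
Hypothesis F_derive : forall u, 0 < u -> is_derive F u (gamma / u - k).
Hypothesis psi_ode : forall u, a < u < b ->
  Derive psi u * psi u - (gamma + delta) / u * psi u = - delta * F u / u.

(* [psi] frozen beyond [b]: continuous on the whole half-line [(a, +oo)], so that
   the integrals below can be differentiated at every point of [(a, b]]. *)
Let psic (y : R) : R := psi (Rmin y b).
Let phi (y : R) : R := RInt (fun xi => / (xi * psic xi)) y b.
Let J (y : R) : R := RInt (fun v => exp (delta * phi v)) y b.

Lemma psic_eq (y : R) : y <= b -> psic y = psi y.
Proof. intros hy; unfold psic; now rewrite Rmin_left. Qed.

Lemma psic_pos (y : R) : a < y -> 0 < psic y.
Proof.
  intros hy; apply psi_pos; split; [apply Rmin_glb_lt; lra | apply Rmin_r].
Qed.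

Lemma psic_continuous (y : R) : a < y -> continuous psic y.
Proof.
  apply (continuous_clamp psi a b a_lt_b); [|exact psi_left_continuous].
  intros c hc; destruct (psi_derivable c hc) as [l hl].
  exact (is_derive_continuous psi c l hl).
Qed.

Lemma psic_derive (y : R) : a < y < b -> is_derive psic y (Derive psi y).
Proof.
  intros hy; apply (is_derive_ext_loc psi).
  - apply locally_interval with m_infty b; [exact I | apply hy |].
    intros z _ hz; symmetry; apply psic_eq; simpl in hz; lra.
  - now apply Derive_correct, psi_derivable.
Qed.

Lemma phi_derive (y : R) : a < y -> is_derive phi y (- / (y * psic y)).
Proof.
  intros hy; apply (is_derive_RInt_lower (fun xi => / (xi * psic xi)) a b);
    [|exact hy | exact a_lt_b].
  intros z hz; apply (continuous_Rinv_comp (fun xi => xi * psic xi)).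
  - apply (continuous_mult (K := R_AbsRing)); [apply continuous_id | now apply psic_continuous].
  - pose proof (psic_pos z hz); apply Rgt_not_eq, Rmult_lt_0_compat; lra.
Qed.

Lemma exp_phi_derive (y : R) : a < y ->
  is_derive (fun v => exp (delta * phi v)) y (- / (y * psic y) * (delta * exp (delta * phi y))).
Proof.
  intros hy; apply (is_derive_comp (fun z => exp (delta * z)) phi); [|now apply phi_derive].
  auto_derive; [exact I | ring].
Qed.

Lemma J_derive (y : R) : a < y -> is_derive J y (- exp (delta * phi y)).
Proof.
  intros hy; apply (is_derive_RInt_lower (fun v => exp (delta * phi v)) a b);
    [|exact hy | exact a_lt_b].
  intros z hz; exact (is_derive_continuous _ _ _ (exp_phi_derive z hz)).
Qed.

Let H (y : R) : R := (F y - psic y) * exp (delta * phi y) - k * J y.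

(* By the equation for [psi], both [(F - psi) e^{delta phi}] and [k J] have derivative
   [- k e^{delta phi}] on [(a, b)]. *)
Lemma H_derive_0 (y : R) : a < y < b -> is_derive H y 0.
Proof.
  intros hy.
  assert (hpsi : 0 < psi y) by (apply psi_pos; lra).
  assert (hD : Derive psi y = ((gamma + delta) / y * psi y + - delta * F y / y) / psi y).
  { rewrite <- (psi_ode y hy); field; lra. }
  assert (stationary :
    (gamma / y - k - Derive psi y) * exp (delta * phi y)
    + (F y - psic y) * (- / (y * psic y) * (delta * exp (delta * phi y)))
    - k * - exp (delta * phi y) = 0).
  { rewrite psic_eq, hD by lra; field; lra. }
  rewrite <- stationary.
  apply (is_derive_minus (V := R_NormedModule)
    (fun v => (F v - psic v) * exp (delta * phi v)) (fun v => k * J v)).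
  - apply (is_derive_mult (K := R_AbsRing) (fun v => F v - psic v) (fun v => exp (delta * phi v)));
      [| now apply exp_phi_derive | apply Rmult_comm].
    apply (is_derive_minus (V := R_NormedModule) F psic);
      [apply F_derive; lra | now apply psic_derive].
  - apply (is_derive_scal J y k); apply J_derive; lra.
Qed.

Lemma H_continuous (y : R) : a < y -> continuous H y.
Proof.
  intros hy.
  apply (continuous_minus (V := R_NormedModule)).
  - apply (continuous_mult (K := R_AbsRing)).
    + apply (continuous_minus (V := R_NormedModule)); [|now apply psic_continuous].
      apply (is_derive_continuous _ _ _ (F_derive y ltac:(lra))).
    + exact (is_derive_continuous _ _ _ (exp_phi_derive y hy)).
  - apply (continuous_scal_r (K := R_AbsRing) (V := R_NormedModule) k).
    exact (is_derive_continuous _ _ _ (J_derive y hy)).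
Qed.

Lemma varphi_eq (u : R) : a < u <= b -> varphi psi b u = phi u.
Proof.
  intros hu; apply RInt_ext; intros x hx.
  rewrite Rmin_left, Rmax_right in hx by lra.
  rewrite psic_eq by lra; reflexivity.
Qed.

Lemma RInt_exp_varphi_eq (u : R) : a < u <= b ->
  RInt (fun v => exp (delta * varphi psi b v)) u b = J u.
Proof.
  intros hu; apply RInt_ext; intros x hx.
  rewrite Rmin_left, Rmax_right in hx by lra.
  rewrite varphi_eq by lra; reflexivity.
Qed.

Theorem first_integral (u : R) : a < u <= b ->
  (F u - psi u) * exp (delta * varphi psi b u)
  - k * RInt (fun v => exp (delta * varphi psi b v)) u b = F b - psi b.
Proof.
  intros hu.
  rewrite varphi_eq, RInt_exp_varphi_eq, <- psic_eq by lra.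
  change (H u = F b - psi b).
  transitivity (H b).
  - destruct (Rle_lt_or_eq_dec _ _ (proj2 hu)) as [hub | ->]; [|reflexivity].
    apply eq_of_is_derive_0; [exact hub | |].
    + intros y hy; apply H_continuous; lra.
    + intros y hy; apply H_derive_0; lra.
  - unfold H, J, phi; rewrite !RInt_point, psic_eq by lra.
    unfold zero; simpl; rewrite Rmult_0_r, exp_0; ring.
Qed.

Lemma RInt_exp_varphi_ge_0 (u : R) : a < u <= b ->
  0 <= RInt (fun v => exp (delta * varphi psi b v)) u b.
Proof.
  intros hu; rewrite RInt_exp_varphi_eq by exact hu.
  apply RInt_ge_0; [lra | | intros x _; apply Rlt_le, exp_pos].
  apply (ex_RInt_continuous (V := R_CompleteNormedModule)); intros z hz.
  rewrite Rmin_left, Rmax_right in hz by lra.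
  apply (is_derive_continuous _ _ _ (exp_phi_derive z ltac:(lra))).
Qed.

Corollary F_sub_psi_eq (u : R) : a < u <= b ->
  F u - psi u = (F b - psi b + k * RInt (fun v => exp (delta * varphi psi b v)) u b)
                * exp (- delta * varphi psi b u).
Proof.
  intros hu; rewrite <- (first_integral u hu).
  replace (- delta * varphi psi b u) with (- (delta * varphi psi b u)) by ring.
  rewrite exp_Ropp; field; apply Rgt_not_eq, exp_pos.
Qed.

Lemma F_sub_psi_ge_0 (u : R) : 0 <= F b - psi b -> 0 <= k -> a < u <= b -> 0 <= F u - psi u.
Proof.
  intros hb hk hu; rewrite (F_sub_psi_eq u hu).
  pose proof (RInt_exp_varphi_ge_0 u hu).
  apply Rmult_le_pos; [|apply Rlt_le, exp_pos].
  assert (0 <= k * RInt (fun v => exp (delta * varphi psi b v)) u b) by (apply Rmult_le_pos; lra).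
  lra.
Qed.

Theorem psi_F_sub_psi_vanish : F a = 0 -> 0 <= F b - psi b -> 0 <= k ->
  filterlim psi (at_right a) (locally 0)
  /\ filterlim (fun u => F u - psi u) (at_right a) (locally 0).
Proof.
  intros Fa hb hk.
  assert (F_lim : filterlim F (at_right a) (locally 0)).
  { rewrite <- Fa; apply (filterlim_filter_le_1 F (filter_le_within _)).
    exact (is_derive_continuous _ _ _ (F_derive a a_pos)). }
  split; apply (filterlim_at_right_squeeze_0 _ F a b a_lt_b); try exact F_lim;
    intros u hu; pose proof (psi_pos u ltac:(lra)); pose proof (F_sub_psi_ge_0 u hb hk ltac:(lra));
    lra.
Qed.

End FirstIntegral.

Theorem proposition2
  (beta gamma delta St Et It Rt alpha : R) (psi : R -> R)
  (hb : 0 < beta) (hg : 0 < gamma) (hd : 0 < delta)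
  (hN : 0 < St + Et + It + Rt)
  (A1 : 0 < It)
  (A2 : Et > (gamma / delta) * It)
  (A3 : St > delta * Et / (beta * It))
  (A4a : 0 <= Rt)
  (A4b : St + Et + It + Rt > St * exp ((beta / gamma) * Rt) + Rt)
  (halpha_lo : Rt < alpha) (halpha_hi : alpha < St + Et + It + Rt)
  (halpha_eq : alpha = (St + Et + It + Rt)
      - St * exp ((beta / gamma) * Rt) * exp (- (beta / gamma) * alpha))
  (A5 : St < (gamma / beta) * exp ((beta / gamma) * (alpha - Rt)))
  (hpsi_pos : forall u, exp (- (beta / gamma) * alpha) < u <= exp (- (beta / gamma) * Rt) ->
      0 < psi u)
  (hpsi_C1 : forall u, exp (- (beta / gamma) * alpha) < u < exp (- (beta / gamma) * Rt) ->
      ex_derive psi u /\ continuous (Derive psi) u)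
  (hpsi_cont_u0 : filterlim psi (at_left (exp (- (beta / gamma) * Rt)))
      (locally (psi (exp (- (beta / gamma) * Rt)))))
  (hpsi_ode : forall u, exp (- (beta / gamma) * alpha) < u < exp (- (beta / gamma) * Rt) ->
      Derive psi u * psi u - (gamma + delta) / u * psi u =
      - delta * (beta * (St + Et + It + Rt) - beta * St * exp ((beta / gamma) * Rt) * u
                 + gamma * ln u) / u)
  (hpsi_u0 : psi (exp (- (beta / gamma) * Rt)) = beta * It) :
  filterlim psi (at_right (exp (- (beta / gamma) * alpha))) (locally 0) /\
  filterlim (fun u =>
      Et * exp (- delta * varphi psi (exp (- (beta / gamma) * Rt)) u)
      + St * exp ((beta / gamma) * Rt)
          * exp (- delta * varphi psi (exp (- (beta / gamma) * Rt)) u)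
          * RInt (fun v => exp (delta * varphi psi (exp (- (beta / gamma) * Rt)) v))
                 u (exp (- (beta / gamma) * Rt)))
    (at_right (exp (- (beta / gamma) * alpha))) (locally 0).
Proof.
  set (a := exp (- (beta / gamma) * alpha)) in *.
  set (b := exp (- (beta / gamma) * Rt)) in *.
  set (c := exp ((beta / gamma) * Rt)) in *.
  set (F := final_size_fun beta gamma (St + Et + It + Rt) (beta * St * c)).
  assert (a_pos : 0 < a) by apply exp_pos.
  assert (a_lt_b : a < b).
  { assert (0 < beta / gamma) by (apply Rdiv_lt_0_compat; lra).
    apply exp_increasing; nra. }
  assert (Et_pos : 0 < Et).
  { assert (0 < gamma / delta * It) by (apply Rmult_lt_0_compat; [apply Rdiv_lt_0_compat|]; lra).
    lra. }
  assert (k_ge_0 : 0 <= beta * St * c).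
  { assert (0 < delta * Et / (beta * It)) by (apply Rdiv_lt_0_compat; nra).
    assert (0 < c) by apply exp_pos; apply Rmult_le_pos; [apply Rmult_le_pos|]; lra. }
  assert (F_a : F a = 0) by (now apply final_size_fun_root).
  assert (F_b : F b - psi b = beta * Et)
    by (rewrite hpsi_u0; unfold F, b, c; rewrite final_size_fun_initial by exact hg; ring).
  assert (F_derive : forall u, 0 < u -> is_derive F u (gamma / u - beta * St * c))
    by (intros u hu; now apply is_derive_final_size_fun).
  assert (psi_derivable : forall u, a < u < b -> ex_derive psi u)
    by (now intros u hu; apply hpsi_C1).
  destruct (psi_F_sub_psi_vanish a b gamma delta (beta * St * c) F psi a_pos a_lt_b
    hpsi_pos psi_derivable hpsi_cont_u0 F_derive hpsi_ode F_a) as [psi_lim F_sub_psi_lim];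
    [rewrite F_b; nra | exact k_ge_0 |].
  split; [exact psi_lim|].
  apply (filterlim_ext_loc (fun u => / beta * (F u - psi u))).
  - apply (at_right_of_interval _ a b a_lt_b); intros u hu.
    rewrite (F_sub_psi_eq a b gamma delta (beta * St * c) F psi a_pos a_lt_b
      hpsi_pos psi_derivable hpsi_cont_u0 F_derive hpsi_ode u), F_b by lra.
    field; lra.
  - rewrite <- (Rmult_0_r (/ beta)).
    exact (filterlim_comp _ _ _ _ _ _ _ _ F_sub_psi_lim (filterlim_scal_r (/ beta) 0)).
Qed.
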